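(* Let $(G,\gamma,b)$ be an RES-graph and let $f_0$ and $f_1$ be arcs of $G$ with the same head. Then no basis of the flooding matroid $M(G,\gamma,b)$ contains both $(f_0,0)$ and $(f_1,1)$.
   Context: Graphs are finite and may have loops and multiple edges. Each edge consists of two half-edges; each half-edge is incident to a vertex, and a loop contributes $2$ to the degree of its vertex. An arc is an ordered pair $(h_1,h_2)$ of half-edges forming an edge; its tail is the vertex of $h_1$ and its head is the vertex of $h_2$. A trail is a sequence of arcs whose edges are pairwise distinct and such that the head of each arc (other than the last) is the tail of the next. Its tail and head are the tail of its first arc and the head of its last arc. A circuit is a trail whose head equals its tail. A circuit-decomposition is a collection of circuits using every edge exactly once. A graph is Eulerian if it is connected and every vertex has even degree. A signature is a function $\gamma:E(G)\to\mathbb{Z}_2$. The weight of a trail is the $\mathbb{Z}_2$-sum of $\gamma$ over its edges, and a trail is zero or non-zero accordingly. An RES-graph is a triple $(G,\gamma,b)$ where $G$ is Eulerian, $\gamma$ is a signature of $G$, and $b\in V(G)$. A flooding is a circuit-decomposition of $G$ of size $\deg(b)/2$ in which every circuit has $b$ as its tail and head. A flooding is optimal if it has the maximum number of non-zero circuits among all floodings of $(G,\gamma,b)$. For a zero circuit $C$ with tail and head $b$, a representative of $C$ is a pair $(f,\alpha)$ where $f$ is an arc of $C$ and $\alpha\in\{0,1\}$ is the weight of the initial subtrail of $C$ ending with $f$ (i.e., $C$ with all arcs after $f$ deleted). A system of representatives for a flooding $\mathcal{C}$ is a set consisting of exactly one representative for each zero circuit of $\mathcal{C}$. The flooding matroid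 $M(G,\gamma,b)$ has as ground set all pairs $(f,\alpha)$ with $f$ an arc of $G$ and $\alpha\in\{0,1\}$. Its bases are the systems of representatives of optimal floodings; if an optimal flooding has no zero circuits, then the empty set is a basis. *)

From mathcomp Require Import all_boot.
Set Implicit Arguments. Unset Strict Implicit. Unset Printing Implicit Defensive.

(* A finite graph (loops and multiple edges allowed) is given by finite types
   of vertices V and edges E, where each edge e has two half-edges (e,false)
   and (e,true); inc maps each half-edge to its incident vertex. *)

Section RES.
Variables (V E : finType) (inc : E * bool -> V).

Definition halfedge := (E * bool)%type.

(* The arc (e,d) is the ordered pair of half-edges ((e,d),(e,~~d)). *)
Definition garc := (E * bool)%type.
Definition arc_edge (a : garc) : E := a.1.
Definition atail (a : garc) : V := inc a.
Definition ahead (a : garc) : V := inc (a.1, ~~ a.2).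

(* degree: number of half-edges at v (a loop contributes 2) *)
Definition deg (v : V) : nat := #|[set h : halfedge | inc h == v]|.

Definition adj : rel V := fun u v =>
  [exists e : E, ((inc (e, false) == u) && (inc (e, true) == v))
              || ((inc (e, true) == u) && (inc (e, false) == v))].

Definition connected_graph : Prop := forall u v : V, connect adj u v.

Definition eulerian : Prop := connected_graph /\ forall v : V, ~~ odd (deg v).

Definition is_trail (s : seq garc) : bool :=
  match s with
  | [::] => false
  | a :: s' => uniq (map arc_edge s) && path (fun x y => ahead x == atail y) a s'
  end.

Definition trail_tail (a0 : garc) (s : seq garc) : V := atail (head a0 s).
Definition trail_head (a0 : garc) (s : seq garc) : V := ahead (last a0 s).

Definition circuit_at (b : V) (s : seq garc) : bool :=
  match s with
  | [::] => false
  | a :: _ => [&& is_trail s, trail_tail a s == b & trail_head a s == b]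
  end.

Variable gamma : E -> bool. (* signature into Z_2 = bool with addb *)

Definition weight (s : seq garc) : bool :=
  foldr (fun a acc => gamma (arc_edge a) (+) acc) false s.

Definition flooding (b : V) (F : seq (seq garc)) : Prop :=
  [/\ all (circuit_at b) F, size F = (deg b) %/ 2
    & perm_eq (flatten (map (map arc_edge) F)) (enum E)].

Definition num_nonzero (F : seq (seq garc)) : nat := count weight F.

Definition optimal_flooding (b : V) (F : seq (seq garc)) : Prop :=
  flooding b F /\
  forall F' : seq (seq garc), flooding b F' -> num_nonzero F' <= num_nonzero F.

Definition representative (C : seq garc) (p : garc * bool) : bool :=
  (p.1 \in C) && (weight (take (index p.1 C).+1 C) == p.2).

Definition system_of_representatives (F : seq (seq garc)) (S : {set garc * bool}) : Prop :=
  exists r : 'I_(size F) -> garc * bool,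
    (forall i : 'I_(size F), ~~ weight (nth [::] F i) ->
        representative (nth [::] F i) (r i)) /\
    S = [set r i | i : 'I_(size F) & ~~ weight (nth [::] F i)].

Definition flooding_matroid_basis (b : V) (S : {set garc * bool}) : Prop :=
  exists F : seq (seq garc), optimal_flooding b F /\ system_of_representatives F S.

End RES.

From mathcomp Require Import all_boot.
From mathcomp Require Import zify.
Set Implicit Arguments. Unset Strict Implicit. Unset Printing Implicit Defensive.

(* Suppose a basis B of the flooding matroid contains
   (f0,0) and (f1,1), coming from an optimal flooding F.  These are
   representatives of two distinct zero circuits C0 and C1 of F (a single
   circuit has a single representative).  Cut each circuit just after its
   representative arc: Ci = Pi ++ Qi with f_i the last arc of Pi.  Since Ci is
   zero, the weights satisfy w(P0) = w(Q0) = 0 and w(P1) = w(Q1) = 1.  As f0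
   and f1 have the same head, the exchanged sequences P0 ++ Q1 and P1 ++ Q0
   are again circuits at b, so replacing C0, C1 by them yields a flooding with
   two more non-zero circuits, contradicting optimality. *)

Lemma last_take_index (T : eqType) (x f : T) (s : seq T) :
  f \in x :: s -> last x (take (index f (x :: s)) s) = f.
Proof.
elim: s x => [|y s IH] x; first by rewrite mem_seq1 => /eqP ->.
rewrite in_cons /=; case: (x =P f) => [-> // | /eqP neq_xf].
by rewrite eq_sym (negPf neq_xf) => /IH.
Qed.

Lemma perm_nth2_front (T : eqType) (x0 : T) (s : seq T) i j :
  i < size s -> j < size s -> i != j ->
  exists rest, perm_eq s (nth x0 s i :: nth x0 s j :: rest).
Proof.
move=> lti ltj neq_ij.
set others := [seq k <- iota 0 (size s) | k \notin [:: i; j]].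
exists (map (nth x0 s) others).
have perm_idx : perm_eq (iota 0 (size s)) (i :: j :: others).
  apply: uniq_perm; first exact: iota_uniq.
    rewrite /= in_cons negb_or neq_ij /others !mem_filter !inE !eqxx orbT /=.
    by rewrite filter_uniq ?iota_uniq.
  move=> k; rewrite !inE /others mem_filter !inE mem_iota /=.
  by case: eqP => [->|_]; case: eqP => [->|_]; rewrite ?lti ?ltj.
by rewrite -{1}(mkseq_nth x0 s) /mkseq -(map_cons (nth x0 s)) -map_cons perm_map.
Qed.

Section Exchange.
Variables (V E : finType) (inc : E * bool -> V) (gamma : E -> bool) (b : V).

Let link (x y : garc E) : bool := ahead inc x == atail inc y.

Definition prefix_at (C : seq (garc E)) (f : garc E) : seq (garc E) :=
  take (index f C).+1 C.
Definition suffix_at (C : seq (garc E)) (f : garc E) : seq (garc E) :=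
  drop (index f C).+1 C.

Definition splice (C0 : seq (garc E)) (f0 : garc E) (C1 : seq (garc E)) (f1 : garc E) :=
  prefix_at C0 f0 ++ suffix_at C1 f1.

Lemma circuit_prefix C f : circuit_at inc b C -> f \in C ->
  exists a s, [/\ prefix_at C f = a :: s, atail inc a = b, path link a s & last a s = f].
Proof.
case: C => [|a s] //= /and3P [/andP [_ walk] tail_b _] /last_take_index last_f.
exists a, (take (index f (a :: s)) s); split=> //; first exact: (eqP tail_b).
by rewrite -(cat_take_drop (index f (a :: s)) s) cat_path in walk; case/andP: walk.
Qed.

Lemma circuit_suffix C f : circuit_at inc b C -> f \in C ->
  path link f (suffix_at C f) /\ ahead inc (last f (suffix_at C f)) = b.
Proof.
case: C => [|a s] //= /and3P [/andP [_ walk] _ /eqP head_b] /last_take_index last_f.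
rewrite -(cat_take_drop (index f (a :: s)) s) cat_path last_f in walk.
rewrite /trail_head /= -(cat_take_drop (index f (a :: s)) s) last_cat last_f in head_b.
by case/andP: walk.
Qed.

Lemma path_link_head x x' q : ahead inc x = ahead inc x' -> path link x q = path link x' q.
Proof. by case: q => //= y q; rewrite /link => ->. Qed.

Lemma ahead_last_head x x' q :
  ahead inc x = ahead inc x' -> ahead inc (last x q) = ahead inc (last x' q).
Proof. by case: q. Qed.

Lemma circuit_splice C0 C1 f0 f1 :
  circuit_at inc b C0 -> circuit_at inc b C1 -> f0 \in C0 -> f1 \in C1 ->
  ahead inc f0 = ahead inc f1 -> uniq (map (@arc_edge E) (splice C0 f0 C1 f1)) ->
  circuit_at inc b (splice C0 f0 C1 f1).
Proof.
rewrite /splice => circ0 circ1 f0_in f1_in same_head.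
have [a [s [-> tail_a walk0 last0]]] := circuit_prefix circ0 f0_in.
have [walk1 head1] := circuit_suffix circ1 f1_in.
rewrite cat_cons => /= edges_uniq.
rewrite /= edges_uniq /trail_tail /trail_head /= tail_a eqxx cat_path walk0 last0.
by rewrite (path_link_head _ same_head) walk1 last_cat last0 (ahead_last_head _ same_head) head1 eqxx.
Qed.

Lemma prefix_suffix C f : prefix_at C f ++ suffix_at C f = C.
Proof. exact: cat_take_drop. Qed.

Lemma weight_cat s1 s2 : weight gamma (s1 ++ s2) = weight gamma s1 (+) weight gamma s2.
Proof. by elim: s1 => //= a s ->; rewrite addbA. Qed.

Lemma weight_suffix_rep C f alpha :
  representative gamma C (f, alpha) -> ~~ weight gamma C ->
  weight gamma (suffix_at C f) = alpha.
Proof.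
case/andP=> _ /eqP weight_prefix; rewrite -{1}(prefix_suffix C f) weight_cat.
rewrite -/(prefix_at C f) weight_prefix {weight_prefix} /=.
by case: alpha; case: weight.
Qed.

Lemma weight_splice_rep C0 C1 f0 f1 alpha0 alpha1 :
  representative gamma C0 (f0, alpha0) -> representative gamma C1 (f1, alpha1) ->
  ~~ weight gamma C1 -> weight gamma (splice C0 f0 C1 f1) = alpha0 (+) alpha1.
Proof.
move=> rep0 rep1 zero1; rewrite weight_cat (weight_suffix_rep rep1 zero1).
by case/andP: rep0 => _ /eqP /= ->.
Qed.

Lemma flooding_perm F F' : flooding inc b F -> perm_eq F F' -> flooding inc b F'.
Proof.
case=> all_circ size_F edges_F perm_FF'; split.
- by rewrite -(perm_all _ perm_FF').
- by rewrite -(perm_size perm_FF').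
- apply: perm_trans edges_F; apply/perm_flatten/perm_map; by rewrite perm_sym.
Qed.

Lemma flooding_exchange C0 C1 R f0 f1 :
  flooding inc b (C0 :: C1 :: R) -> f0 \in C0 -> f1 \in C1 ->
  ahead inc f0 = ahead inc f1 ->
  flooding inc b (splice C0 f0 C1 f1 :: splice C1 f1 C0 f0 :: R).
Proof.
case=> all_circ size_F edges_F f0_in f1_in same_head.
set F' := splice C0 f0 C1 f1 :: _.
have edges_perm : perm_eq (flatten (map (map (@arc_edge E)) F'))
                          (flatten (map (map (@arc_edge E)) (C0 :: C1 :: R))).
  rewrite /F' /splice /= -{3}(prefix_suffix C0 f0) -{3}(prefix_suffix C1 f1) !map_cat.
  by apply/permP => x; rewrite !count_cat; lia.
have edges_uniq : uniq (flatten (map (map (@arc_edge E)) F')).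
  by rewrite (perm_uniq edges_perm) (perm_uniq edges_F) enum_uniq.
move: all_circ edges_uniq => /= /and3P [circ0 circ1 circR].
rewrite !cat_uniq => /and3P [uniq0 _ /and3P [uniq1 _ _]].
split=> //=; last exact: perm_trans edges_perm edges_F.
by rewrite circR !circuit_splice.
Qed.

Lemma exchange_gains_two C0 C1 R f0 f1 :
  flooding inc b (C0 :: C1 :: R) ->
  representative gamma C0 (f0, false) -> representative gamma C1 (f1, true) ->
  ~~ weight gamma C0 -> ~~ weight gamma C1 -> ahead inc f0 = ahead inc f1 ->
  exists2 F', flooding inc b F' & num_nonzero gamma F' = (num_nonzero gamma (C0 :: C1 :: R)).+2.
Proof.
move=> flood rep0 rep1 zero0 zero1 same_head.
have f0_in : f0 \in C0 by case/andP: rep0.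
have f1_in : f1 \in C1 by case/andP: rep1.
exists (splice C0 f0 C1 f1 :: splice C1 f1 C0 f0 :: R).
  exact: flooding_exchange.
rewrite /num_nonzero /= (weight_splice_rep rep0 rep1 zero1).
by rewrite (weight_splice_rep rep1 rep0 zero0) (negbTE zero0) (negbTE zero1).
Qed.
End Exchange.

Theorem mainTheorem4 (V E : finType) (inc : E * bool -> V) (gamma : E -> bool)
  (b : V) (f0 f1 : garc E) :
  eulerian inc ->
  ahead inc f0 = ahead inc f1 ->
  forall B : {set garc E * bool},
    flooding_matroid_basis inc gamma b B ->
    ~ ((f0, false) \in B /\ (f1, true) \in B).
Proof.
move=> _ same_head B [F [[flood_F optimal_F] [r [rep_r ->]]]].
case=> /imsetP [i zero_i r_i] /imsetP [j zero_j r_j].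
rewrite !inE in zero_i zero_j.
have rep0 := rep_r i zero_i; rewrite -r_i in rep0.
have rep1 := rep_r j zero_j; rewrite -r_j in rep1.
have neq_ij : (i : nat) != j.
  by apply/eqP => /val_inj same_ij; move: r_j; rewrite -same_ij -r_i.
have [R perm_F] := perm_nth2_front [::] (ltn_ord i) (ltn_ord j) neq_ij.
have [F' flood_F' gain] :=
  exchange_gains_two (flooding_perm flood_F perm_F) rep0 rep1 zero_i zero_j same_head.
have := optimal_F _ flood_F'.
by rewrite gain /num_nonzero -(permP perm_F) ltnNge leqnSn.
Qed.
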